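(* Let $\mathcal{S}$ be a finite set of road segments and $y_1,\dots,y_N$ (collectively $y_{[N]}$) the routes of $N$ historical trips, each a nonempty set of distinct segments. For each $n$ and $s\in y_n$ one observes $T'_{n,s}=\theta_s+\varepsilon_{n,s}$, where the $\theta_s$ are i.i.d. with mean $\mu$ and variance $\tau^2>0$, independent of the errors; for each $n$ the errors $(\varepsilon_{n,s})_{s\in y_n}$ have mean $0$ and covariances $\sigma_{s,t}$; errors from different trips are independent. Fix a route $y\subseteq\mathcal{S}$. (1) Given a partition $\mathscr{S}_y$ of $y$ into super-segments, with $N_S=|\{n:S\subseteq y_n\}|\ge1$ for each $S\in\mathscr{S}_y$, the generalized segment-based estimator $$\hat\Theta_y=\sum_{S\in\mathscr{S}_y}\Big[(1-\phi_S)|S|\mu+\phi_S\frac{\sum_{n:S\subseteq y_n}\sum_{s\in S}T'_{n,s}}{N_S}\Big]$$ has minimal integrated risk over all real weights $(\phi_S)_{S\in\mathscr{S}_y}$ exactly when $(\phi_S)=(\phi^\ast_S)$, where $(\phi^\ast_S)_{S\in\mathscr{S}_y}$ is the unique solution of the linear system $$\sum_{T\in\mathscr{S}_y}\frac{N_{S\cup T}}{N_SN_T}\phi^\ast_T\Big(\sum_{s\in S,t\in T}\sigma_{s,t}\Big)+(\phi^\ast_S-1)|S|\tau^2=0,\qquad S\in\mathscr{S}_y.$$ (2) Given a neighborhood $\delta(y)$ (a set of historical routes) with notation $M_{\delta(y)}$, $N^{\delta(y)}_s$, $\mathcal{S}_{\delta(y)}$, $\bar y_{\delta(y)}$ as below,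 the route-based estimator with weight $\phi$, $$(1-\phi)|y|\mu+\phi\frac{\sum_{n:y_n\in\delta(y)}\sum_{s\in y_n}T'_{n,s}}{M_{\delta(y)}},$$ has minimal integrated risk over all real $\phi$ when $\phi=\phi^\ast_{\delta(y)}(M_{\delta(y)})$ with $$\phi^\ast_{\delta(y)}(M_{\delta(y)})=\frac{\big(\sum_{s\in y}N^{\delta(y)}_s\big)\tau^2}{\sum_{s\in\mathcal{S}_{\delta(y)}}\frac{(N^{\delta(y)}_s)^2}{M_{\delta(y)}}\tau^2+\frac{\sum_{n:y_n\in\delta(y)}\sum_{s,t\in y_n}\sigma_{s,t}}{M_{\delta(y)}}+M_{\delta(y)}\mu^2(\bar y_{\delta(y)}-|y|)^2}.$$
   Context: The integrated risk of an estimator $\hat\Theta_y$ is $\mathbb{E}[(\hat\Theta_y-\sum_{s\in y}\theta_s)^2\mid y_{[N]}]$, expectation over errors and prior of $\theta$, conditional on the historical routes. $N_{S\cup T}=|\{n:S\cup T\subseteq y_n\}|$. $M_{\delta(y)}=\sum_n\mathbf 1\{y_n\in\delta(y)\}$, $N^{\delta(y)}_s=|\{n:y_n\in\delta(y),s\in y_n\}|$, $\mathcal{S}_{\delta(y)}=\bigcup_{y'\in\delta(y)}y'$, $\bar y_{\delta(y)}=\sum_{n:y_n\in\delta(y)}|y_n|/M_{\delta(y)}$. No distributional assumption beyond means and covariances is imposed. *)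

From HB Require Import structures.
From mathcomp Require Import all_boot all_order all_algebra.
From mathcomp Require Import all_classical all_reals all_analysis.
Set Implicit Arguments. Unset Strict Implicit. Unset Printing Implicit Defensive.
Import Order.TTheory GRing.Theory Num.Theory.
Local Open Scope ring_scope.

Section TravelTime.
Context {d : measure_display} {T : measurableType d} {R : realType}.
Context {Seg : finType} {N : nat}.
Variables (yN : 'I_N -> {set Seg}) (theta : Seg -> T -> R)
  (eps : 'I_N -> Seg -> T -> R).

Definition Tobs (n : 'I_N) (s : Seg) : T -> R := fun w => theta s w + eps n s w.

Definition NS (S : {set Seg}) : nat := #|[set n | S \subset yN n]|.

Definition truth (y : {set Seg}) : T -> R := fun w => \sum_(s in y) theta s w.

Definition seg_est (mu : R) (Sy : {set {set Seg}}) (phi : {set Seg} -> R)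
  : T -> R := fun w =>
  \sum_(S in Sy) ((1 - phi S) * #|S|%:R * mu
     + phi S * ((\sum_(n | S \subset yN n) \sum_(s in S) Tobs n s w)
                / (NS S)%:R)).

Definition seg_system (sigma : Seg -> Seg -> R) (tau2 : R)
  (Sy : {set {set Seg}}) (phi : {set Seg} -> R) : Prop :=
  forall S, S \in Sy ->
    \sum_(S' in Sy) ((NS (S :|: S'))%:R / ((NS S)%:R * (NS S')%:R) * phi S'
                      * (\sum_(s in S) \sum_(t in S') sigma s t))
    + (phi S - 1) * #|S|%:R * tau2 = 0.

Definition Mdelta (delta : {set {set Seg}}) : nat := #|[set n | yN n \in delta]|.
Definition Ndelta (delta : {set {set Seg}}) (s : Seg) : nat :=
  #|[set n | (yN n \in delta) && (s \in yN n)]|.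
Definition Sdelta (delta : {set {set Seg}}) : {set Seg} :=
  \bigcup_(y' in delta) y'.
Definition ybar (delta : {set {set Seg}}) : R :=
  (\sum_(n | yN n \in delta) #|yN n|%:R) / (Mdelta delta)%:R.

Definition route_est (mu : R) (y : {set Seg}) (delta : {set {set Seg}})
  (phi : R) : T -> R := fun w =>
  (1 - phi) * #|y|%:R * mu
  + phi * ((\sum_(n | yN n \in delta) \sum_(s in yN n) Tobs n s w)
           / (Mdelta delta)%:R).

Definition phistar_route (sigma : Seg -> Seg -> R) (mu tau2 : R)
  (y : {set Seg}) (delta : {set {set Seg}}) : R :=
  let M := (Mdelta delta)%:R in
  ((\sum_(s in y) (Ndelta delta s)%:R) * tau2) /
  ((\sum_(s in Sdelta delta) (Ndelta delta s)%:R ^+ 2 / M) * tau2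
   + (\sum_(n | yN n \in delta) \sum_(s in yN n) \sum_(t in yN n) sigma s t) / M
   + M * mu ^+ 2 * (ybar delta - #|y|%:R) ^+ 2).

End TravelTime.

Definition risk {d} {T : measurableType d} {R : realType}
  (P : probability T R) (est tru : T -> R) : \bar R :=
  'E_P[fun w => (est w - tru w) ^+ 2].

(* Both estimators are affine in the observations T'_{n,s} = theta_s + eps_{n,s}, so their
   error is an affine combination c + sum_s a_s theta_s + sum_{n,s} b_{n,s} eps_{n,s}, whose
   second moment depends only on the given means and covariances:
     (c + mu sum_s a_s)^2 + tau^2 sum_s a_s^2 + sum_n sum_{s,t in y_n} b_{n,s} b_{n,t} sigma_{s,t}.
   For the segment-based estimator this turns the risk into the quadratic
   sum_S |S| tau^2 (phi_S - 1)^2 + phi^T C phi with C positive semidefinite; it is strictly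
   convex, so its minimisers are exactly the solutions of its normal equations, which are the
   stated linear system, and a solution exists because C + diag(|S| tau^2) is nonsingular.
   For the route-based estimator the risk is a phi^2 - 2 b phi + c with a > 0, minimised at
   b / a, which is phi^* once numerator and denominator are multiplied by M_delta. *)

From HB Require Import structures.
From mathcomp Require Import all_boot all_order all_algebra.
From mathcomp Require Import all_classical all_reals all_analysis.
From mathcomp Require Import ring lra.
Set Implicit Arguments.
Unset Strict Implicit.
Import Order.TTheory GRing.Theory Num.Theory.
Local Open Scope ereal_scope.
Local Open Scope ring_scope.

Lemma sqr_affine_sum (R : comRingType) (I : finType) (c : R) (a x : I -> R) :
  (c + \sum_i a i * x i) ^+ 2 =
  c ^+ 2 + \sum_i 2 * c * a i * x i + \sum_i \sum_j a i * a j * (x i * x j).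
Proof.
rewrite sqrrD; congr (_ + _ + _).
  by rewrite mulr2n mulrDl big_distrr -big_split /=; apply: eq_bigr => i _; ring.
rewrite expr2 big_distrl /=; apply: eq_bigr => i _; rewrite big_distrr /=.
by apply: eq_bigr => j _; ring.
Qed.

Section SecondMoment.
Context {d : measure_display} {T : measurableType d} {R : realType}.
Variable P : probability T R.

Definition mean (X : T -> R) : R := fine 'E_P[X].
Definition cov (X Y : T -> R) : R := fine (covariance P X Y).

Lemma Lfun2_Lfun1 {X : T -> R} : X \in Lfun P 2%:E -> X \in Lfun P 1.
Proof. by apply: Lfun_subset12; rewrite fin_num_measure. Qed.

Lemma meanE (X : T -> R) : X \in Lfun P 1 -> 'E_P[X] = (mean X)%:E.
Proof. by move=> X1; rewrite fineK ?expectation_fin_num. Qed.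

Lemma expectation_affine (I : finType) (c : R) (k : I -> R) (Z : I -> T -> R) :
  (forall i, Z i \in Lfun P 1) ->
  (fun w => c + \sum_i k i * Z i w) \in Lfun P 1 /\
  'E_P[fun w => c + \sum_i k i * Z i w] = (c + \sum_i k i * mean (Z i))%:E.
Proof.
move=> Z1; pose F i := k i \o* Z i.
have F1 i : F i \in Lfun P 1 by rewrite Lfun_scale.
have -> : (fun w => c + \sum_i k i * Z i w) = cst c \+ \sum_i F i.
  by apply/funext => w; rewrite fct_sumE /F /=; under eq_bigr do rewrite mulrC.
have sum1 : \sum_i F i \in Lfun P 1 by apply: rpred_sum.
split; first by rewrite rpredD ?Lfun_cst.
rewrite expectationD ?Lfun_cst // expectation_cst -(big_map F xpredT idfun).
rewrite expectation_sum; last by move=> _ /mapP[i _ ->].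
rewrite big_map (eq_bigr (fun i => (k i * mean (Z i))%:E)) ?sumEFin //.
by move=> i _; rewrite /F expectationZl // meanE.
Qed.

Lemma expectation_mulE (X Y : T -> R) : X \in Lfun P 2%:E -> Y \in Lfun P 2%:E ->
  'E_P[fun w => X w * Y w] = (cov X Y + mean X * mean Y)%:E.
Proof.
move=> X2 Y2; have X1 := Lfun2_Lfun1 X2; have Y1 := Lfun2_Lfun1 Y2.
rewrite /cov (covarianceE X1 Y1 (Lfun2_mul_Lfun1 X2 Y2)) !meanE ?Lfun2_mul_Lfun1 //=.
by rewrite subrK.
Qed.

Lemma expectation_affine_sqr (I : finType) (c : R) (a : I -> R) (Z : I -> T -> R) :
  (forall i, Z i \in Lfun P 2%:E) ->
  'E_P[fun w => (c + \sum_i a i * Z i w) ^+ 2] =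
  ((c + \sum_i a i * mean (Z i)) ^+ 2 + \sum_i \sum_j a i * a j * cov (Z i) (Z j))%:E.
Proof.
move=> Z2; pose W (u : I + I * I) := match u with
  | inl i => Z i | inr p => fun w => Z p.1 w * Z p.2 w end.
pose k (u : I + I * I) := match u with
  | inl i => 2 * c * a i | inr p => a p.1 * a p.2 end.
have W1 u : W u \in Lfun P 1.
  by case: u => [i|p] /=; [exact: Lfun2_Lfun1 | exact: Lfun2_mul_Lfun1].
have sumW (f : I + I * I -> R) : \sum_u k u * f u =
    \sum_i 2 * c * a i * f (inl i) + \sum_i \sum_j a i * a j * f (inr (i, j)).
  by rewrite big_sumType pair_big; congr (_ + _); apply: eq_bigr => -[].
have -> : 'E_P[fun w => (c + \sum_i a i * Z i w) ^+ 2] =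
    'E_P[fun w => c ^+ 2 + \sum_u k u * W u w].
  by congr 'E_P[_]; apply/funext => w; rewrite sqr_affine_sum -addrA sumW.
rewrite (proj2 (expectation_affine (c ^+ 2) k W1)) sqr_affine_sum -addrA.
have meanW u : mean (W u) = match u with
    | inl i => mean (Z i) | inr p => mean (Z p.1) * mean (Z p.2) + cov (Z p.1) (Z p.2) end.
  by case: u => [//|p]; rewrite /mean /= expectation_mulE //= addrC.
rewrite sumW -!addrA; congr (_ + (_ + _))%:E.
rewrite -big_split; apply: eq_bigr => i _; rewrite -big_split.
by apply: eq_bigr => j _; rewrite meanW mulrDr.
Qed.
End SecondMoment.

Section WeightedSquares.
Variables (R : realDomainType) (I : finType) (P : pred I) (w u : I -> R).
Hypothesis w_gt0 : forall i, P i -> 0 < w i.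

Lemma wsqr_sum_ge0 : 0 <= \sum_(i | P i) w i * u i ^+ 2.
Proof. by apply: sumr_ge0 => i Pi; rewrite mulr_ge0 ?sqr_ge0 ?ltW ?w_gt0. Qed.

Lemma wsqr_sum_le0 : \sum_(i | P i) w i * u i ^+ 2 <= 0 -> forall i, P i -> u i = 0.
Proof.
move=> le0 i Pi; have /psumr_eq0P eq0 : \sum_(i | P i) w i * u i ^+ 2 = 0.
  by apply/eqP; rewrite eq_le le0 wsqr_sum_ge0.
have /eqP := eq0 (fun j Pj => mulr_ge0 (ltW (w_gt0 Pj)) (sqr_ge0 (u j))) i Pi.
by rewrite mulf_eq0 sqrf_eq0 gt_eqF ?w_gt0 //= => /eqP.
Qed.

End WeightedSquares.

Section AddDiagonal.
Variables (R : realFieldType) (k : nat) (G : 'I_k -> 'I_k -> R) (dv : 'I_k -> R).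

Definition add_diag_mx : 'M[R]_k := \matrix_(i, j) (G i j + (i == j)%:R * dv i).

Lemma add_diag_mx_row (v : 'I_k -> R) i :
  \sum_j add_diag_mx i j * v j = \sum_j G i j * v j + v i * dv i.
Proof.
rewrite (eq_bigr (fun j => G i j * v j + (i == j)%:R * dv i * v j)); last first.
  by move=> j _; rewrite mxE mulrDl.
rewrite big_split /=; congr (_ + _).
rewrite (bigD1 i) //= big1 => [|j /negPf ij]; last by rewrite eq_sym ij !mul0r.
by rewrite eqxx addr0 mul1r mulrC.
Qed.

Hypothesis G_psd : forall v : 'I_k -> R, 0 <= \sum_i \sum_j v i * v j * G i j.
Hypothesis dv_gt0 : forall i, 0 < dv i.

Lemma add_diag_mx_unit : add_diag_mx \in unitmx.
Proof.
rewrite unitmxE unitfE -det_tr; apply/negP => /det0P[w w_neq0 wM0].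
pose v j := w 0 j.
have vMv : \sum_i \sum_j v i * v j * G i j + \sum_j dv j * v j ^+ 2 = 0.
  transitivity (\sum_j v j * (w *m add_diag_mx^T) 0 j); last first.
    by rewrite wM0 big1 // => j _; rewrite mxE mulr0.
  rewrite -big_split /=; apply: eq_bigr => j _; rewrite mxE.
  under [X in _ = _ * X]eq_bigr do rewrite mxE mulrC.
  rewrite add_diag_mx_row mulrDr big_distrr /=; congr (_ + _); last by rewrite /v; ring.
  by apply: eq_bigr => i _; rewrite /v; ring.
have v0 : forall j, true -> v j = 0.
  by apply: (wsqr_sum_le0 (fun j _ => dv_gt0 j)); have := G_psd v; lra.
by move/negP: w_neq0; apply; apply/eqP/rowP => j; rewrite mxE; exact: v0.
Qed.

Lemma add_diag_solvable :
  exists z : 'I_k -> R, forall i, \sum_j G i j * z j + (z i - 1) * dv i = 0.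
Proof.
pose z := invmx add_diag_mx *m \col_i dv i.
exists (fun j => z j 0) => i; rewrite mulrBl mul1r addrA -add_diag_mx_row.
have := congr1 (fun m : 'cV_k => m i 0) (mulKVmx add_diag_mx_unit (\col_i dv i)).
by rewrite !mxE => ->; rewrite subrr.
Qed.

End AddDiagonal.

Section PenalizedQuadratic.
Variables (R : realFieldType) (I : finType) (A : {set I}) (C : I -> I -> R) (w : I -> R).
Hypothesis C_sym : {in A &, forall S T, C S T = C T S}.
Hypothesis C_psd : forall x : I -> R, 0 <= \sum_(S in A) \sum_(T in A) x S * x T * C S T.
Hypothesis w_gt0 : forall S, S \in A -> 0 < w S.

Definition penalized_quad (x : I -> R) : R :=
  \sum_(S in A) w S * (x S - 1) ^+ 2 + \sum_(S in A) \sum_(T in A) x S * x T * C S T.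

Definition excess_quad (u : I -> R) : R :=
  \sum_(S in A) w S * u S ^+ 2 + \sum_(S in A) \sum_(T in A) u S * u T * C S T.

Definition normal_eq (x : I -> R) : Prop :=
  forall S, S \in A -> \sum_(T in A) C S T * x T + (x S - 1) * w S = 0.

Lemma penalized_quadE z x : normal_eq z ->
  penalized_quad x = penalized_quad z + excess_quad (fun S => x S - z S).
Proof.
move=> nz; set u := fun S => x S - z S.
have cross : \sum_(S in A) \sum_(T in A) u S * (C S T * z T)
    + \sum_(S in A) u S * ((z S - 1) * w S) = 0.
  rewrite -big_split /=; apply: big1 => S AS.
  by rewrite -big_distrr -mulrDr /= nz ?mulr0.
have sq : \sum_(S in A) w S * (x S - 1) ^+ 2 = \sum_(S in A) w S * (z S - 1) ^+ 2
    + \sum_(S in A) w S * u S ^+ 2 + 2 * \sum_(S in A) u S * ((z S - 1) * w S).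
  by rewrite big_distrr -!big_split /=; apply: eq_bigr => S _; rewrite /u; ring.
have swap : \sum_(S in A) \sum_(T in A) z S * u T * C S T =
    \sum_(S in A) \sum_(T in A) u S * (C S T * z T).
  rewrite exchange_big; apply: eq_bigr => S AS; apply: eq_bigr => T AT.
  by rewrite C_sym //; ring.
have bil : \sum_(S in A) \sum_(T in A) x S * x T * C S T =
    \sum_(S in A) \sum_(T in A) z S * z T * C S T
    + \sum_(S in A) \sum_(T in A) u S * u T * C S T
    + \sum_(S in A) \sum_(T in A) u S * (C S T * z T)
    + \sum_(S in A) \sum_(T in A) z S * u T * C S T.
  rewrite -!big_split /=; apply: eq_bigr => S _; rewrite -!big_split /=.
  by apply: eq_bigr => T _; rewrite /u; ring.
rewrite /penalized_quad /excess_quad sq bil swap; lra.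
Qed.

Lemma excess_quad_ge0 u : 0 <= excess_quad u.
Proof. by rewrite /excess_quad addr_ge0 // wsqr_sum_ge0. Qed.

Lemma excess_quad_le0 u : excess_quad u <= 0 -> {in A, forall S, u S = 0}.
Proof.
move=> le0; apply: (wsqr_sum_le0 w_gt0).
by move: le0; rewrite /excess_quad; have := C_psd u; lra.
Qed.

Lemma penalized_quad_minP z x : normal_eq z ->
  (forall y, penalized_quad x <= penalized_quad y) <-> {in A, x =1 z}.
Proof.
move=> nz; split => [x_min S AS | xz y].
  apply/eqP; rewrite -subr_eq0; apply/eqP.
  apply: (excess_quad_le0 (u := fun S => x S - z S)) AS.
  by have := x_min z; rewrite (penalized_quadE x nz); lra.
have -> : penalized_quad x = penalized_quad z.
  rewrite /penalized_quad; congr (_ + _); apply: eq_bigr => S AS; rewrite xz //.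
  by apply: eq_bigr => T AT; rewrite xz.
by rewrite (penalized_quadE y nz) lerDl excess_quad_ge0.
Qed.

Lemma normal_eq_uniq z x : normal_eq z -> normal_eq x -> {in A, x =1 z}.
Proof.
move=> nz nx; apply/(penalized_quad_minP x nz) => y.
by rewrite (penalized_quadE y nx) lerDl excess_quad_ge0.
Qed.

Lemma normal_eq_exists : exists z, normal_eq z.
Proof.
have [A0 | [S0 AS0]] := set_0Vmem A.
  by exists (fun _ => 0) => S; rewrite A0 inE.
pose e := fun i : 'I_#|A| => enum_val (A := mem A) i.
have eA i : e i \in A by exact: enum_valP.
have G_psd (v : 'I_#|A| -> R) : 0 <= \sum_i \sum_j v i * v j * C (e i) (e j).
  have := C_psd (fun S => v (enum_rank_in AS0 S)).
  rewrite big_enum_val; under eq_bigr do rewrite big_enum_val.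
  by rewrite /e; under eq_bigr do under eq_bigr do rewrite !enum_valK_in.
have [z nz] := add_diag_solvable G_psd (fun i => w_gt0 (eA i)).
exists (fun S => z (enum_rank_in AS0 S)) => S AS.
have := nz (enum_rank_in AS0 S); rewrite /e enum_rankK_in // (big_enum_rank AS0) /=.
by under eq_bigr => T AT do rewrite enum_rankK_in //.
Qed.
End PenalizedQuadratic.

Lemma quadratic_argmin (R : realDomainType) (a b c z x : R) :
  0 <= a -> b = z * a -> z ^+ 2 * a - 2 * z * b + c <= x ^+ 2 * a - 2 * x * b + c.
Proof.
move=> a_ge0 ->; rewrite -subr_ge0.
have -> : x ^+ 2 * a - 2 * x * (z * a) + c - (z ^+ 2 * a - 2 * z * (z * a) + c) =
  a * (x - z) ^+ 2 by ring.
by rewrite mulr_ge0 ?sqr_ge0.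
Qed.

Lemma sumr_mkcond_natr (R : pzSemiRingType) (I : finType) (Q : pred I) (F : I -> R) :
  \sum_(i | Q i) F i = \sum_i (Q i)%:R * F i.
Proof.
by rewrite big_mkcond; apply: eq_bigr => i _; case: (Q i); rewrite ?mul1r ?mul0r.
Qed.

Lemma sum_mem_card (R : pzSemiRingType) (I : finType) (A : {set I}) :
  \sum_i (i \in A)%:R = #|A|%:R :> R.
Proof.
by rewrite -sumr_const [RHS]sumr_mkcond_natr; apply: eq_bigr => i _; rewrite mulr1.
Qed.

Lemma sum_subset_natr (R : pzSemiRingType) (I : finType) (A B : {set I}) (F : I -> R) :
  A \subset B -> \sum_(i in B) (i \in A)%:R * F i = \sum_(i in A) F i.
Proof.
move=> AB; rewrite big_mkcond [RHS]big_mkcond /=; apply: eq_bigr => i _.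
case Ai: (i \in A); last by case: (i \in B); rewrite ?mul0r.
by rewrite (fintype.subsetP AB i Ai) mul1r.
Qed.

Lemma partition_sum_natr (R : pzSemiRingType) (I : finType) (D : {set I})
    (Q : {set {set I}}) (F : {set I} -> R) i :
  finset.partition Q D ->
  \sum_(S in Q) (i \in S)%:R * F S = if i \in D then F (finset.pblock Q i) else 0.
Proof.
case/and3P => /eqP covQ trivQ _; case: ifP => iD.
  have iQ : i \in finset.cover Q by rewrite covQ.
  rewrite (bigD1 (finset.pblock Q i)) ?finset.pblock_mem //= finset.mem_pblock iQ.
  rewrite mul1r big1 ?addr0 //.
  move=> S /andP[QS neqS]; case iS: (i \in S); last by rewrite mul0r.
  by move: neqS; rewrite (finset.def_pblock trivQ QS iS) eqxx.
apply: big1 => S QS; case iS: (i \in S); last by rewrite mul0r.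
by move: iD; rewrite -covQ => /negP[]; apply/bigcupP; exists S.
Qed.

Section TravelTimeModel.
Context {d : measure_display} {T : measurableType d} {R : realType}.
Variables (P : probability T R) (Seg : finType) (N : nat) (yN : 'I_N -> {set Seg}).
Variables (theta : Seg -> T -> R) (eps : 'I_N -> Seg -> T -> R).
Variables (mu tau2 : R) (sigma : Seg -> Seg -> R).
Hypothesis theta_L2 : forall s, theta s \in Lfun P 2%:E.
Hypothesis eps_L2 : forall n s, s \in yN n -> eps n s \in Lfun P 2%:E.
Hypothesis theta_mean : forall s, 'E_P[theta s] = mu%:E.
Hypothesis theta_var : forall s, 'V_P[theta s] = tau2%:E.
Hypothesis theta_uncorr : forall s t, s != t -> covariance P (theta s) (theta t) = 0%E.
Hypothesis theta_eps_uncorr :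
  forall s n t, t \in yN n -> covariance P (theta s) (eps n t) = 0%E.
Hypothesis eps_mean : forall n s, s \in yN n -> 'E_P[eps n s] = 0%E.
Hypothesis eps_cov : forall n s t, s \in yN n -> t \in yN n ->
  covariance P (eps n s) (eps n t) = (sigma s t)%:E.
Hypothesis eps_uncorr : forall n m s t, n != m -> s \in yN n -> t \in yN m ->
  covariance P (eps n s) (eps m t) = 0%E.

Definition affine_rv (c : R) (al : Seg -> R) (be : 'I_N -> Seg -> R) : T -> R :=
  fun w => c + \sum_s al s * theta s w + \sum_n \sum_(s in yN n) be n s * eps n s w.

Definition sigma_form (be be' : 'I_N -> Seg -> R) : R :=
  \sum_n \sum_(s in yN n) \sum_(t in yN n) be n s * be' n t * sigma s t.

(* Errors eps n s with s \notin yN n carry no moment assumptions and enter no estimator, so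
   they are replaced by 0. *)
Definition latent (i : Seg + 'I_N * Seg) : T -> R :=
  match i with
  | inl s => theta s
  | inr p => if p.2 \in yN p.1 then eps p.1 p.2 else cst 0
  end.

Definition latent_coef (al : Seg -> R) (be : 'I_N -> Seg -> R) (i : Seg + 'I_N * Seg) : R :=
  match i with inl s => al s | inr p => be p.1 p.2 end.

Lemma latent_L2 i : latent i \in Lfun P 2%:E.
Proof.
case: i => [s|[n s]] /=; first exact: theta_L2.
by case: ifP => [/eps_L2 //|_]; exact: Lfun_cst.
Qed.

Lemma affine_rvE c al be w :
  affine_rv c al be w = c + \sum_i latent_coef al be i * latent i w.
Proof.
rewrite /affine_rv big_sumType -addrA; congr (_ + (_ + _)).
rewrite -(pair_big xpredT xpredT (fun n s => be n s * latent (inr (n, s)) w)) /=.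
apply: eq_bigr => n _; rewrite big_mkcond /=; apply: eq_bigr => s _.
by case: ifP => //= _; rewrite mulr0.
Qed.

Lemma mean_latent i : mean P (latent i) = if i is inl _ then mu else 0.
Proof.
case: i => [s|[n s]] /=; first by rewrite /mean theta_mean.
by case: ifP => ns; rewrite /mean ?eps_mean ?expectation_cst.
Qed.

Lemma cov_latent i j : cov P (latent i) (latent j) =
  match i, j with
  | inl s, inl t => if s == t then tau2 else 0
  | inr p, inr q =>
      if [&& p.2 \in yN p.1, q.2 \in yN q.1 & p.1 == q.1] then sigma p.2 q.2 else 0
  | _, _ => 0
  end.
Proof.
rewrite /cov; case: i => [s|[n s]]; case: j => [t|[m t]] /=.
- case: eqVneq => [<-|st]; last by rewrite theta_uncorr.
  by have := theta_var s; rewrite /variance => ->.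
- by case: ifP => mt; rewrite ?theta_eps_uncorr ?covariance_cst_r.
- by rewrite covarianceC; case: ifP => ns; rewrite ?theta_eps_uncorr ?covariance_cst_r.
- case: ifP => ns /=; last by rewrite covariance_cst_l.
  case: ifP => mt /=; last by rewrite covariance_cst_r.
  case: eqVneq => [nm|nm]; first by subst m; rewrite eps_cov.
  by rewrite eps_uncorr.
Qed.

Arguments latent i : simpl never.

Lemma latent_cov_form al be :
  \sum_i \sum_j latent_coef al be i * latent_coef al be j * cov P (latent i) (latent j) =
  tau2 * \sum_s al s ^+ 2 + sigma_form be be.
Proof.
rewrite big_sumType /= big_distrr /=; congr (_ + _).
  apply: eq_bigr => s _; rewrite big_sumType /= [X in _ + X]big1 ?addr0; last first.
    by move=> p _; rewrite cov_latent mulr0.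
  rewrite (bigD1 s) //= big1 ?addr0 => [|t ts]; last first.
    by rewrite cov_latent eq_sym (negPf ts) mulr0.
  by rewrite cov_latent eqxx; ring.
rewrite /sigma_form -(pair_big xpredT xpredT (fun n s => \sum_j latent_coef al be (inr (n, s))
  * latent_coef al be j * cov P (latent (inr (n, s))) (latent j))) /=.
apply: eq_bigr => n _; rewrite [RHS]big_mkcond /=; apply: eq_bigr => s _.
rewrite big_sumType /= big1 ?add0r => [|t _]; last by rewrite cov_latent mulr0.
rewrite -(pair_big xpredT xpredT (fun m t =>
  be n s * be m t * cov P (latent (inr (n, s))) (latent (inr (m, t))))) /=.
rewrite (bigD1 n) //= [X in _ + X]big1 ?addr0 => [|m mn]; last first.
  by apply: big1 => t _; rewrite cov_latent /= eq_sym (negPf mn) !andbF mulr0.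
case: ifP => ns; last by apply: big1 => t _; rewrite cov_latent /= ns mulr0.
rewrite [RHS]big_mkcond /=; apply: eq_bigr => t _.
by rewrite cov_latent /= ns eqxx andbT /=; case: ifP; rewrite ?mulr0.
Qed.

Lemma expectation_affine_rv_sqr c al be :
  'E_P[fun w => affine_rv c al be w ^+ 2] =
  ((c + mu * \sum_s al s) ^+ 2 + tau2 * \sum_s al s ^+ 2 + sigma_form be be)%:E.
Proof.
have -> : 'E_P[fun w => affine_rv c al be w ^+ 2] =
    'E_P[fun w => (c + \sum_i latent_coef al be i * latent i w) ^+ 2].
  by congr 'E_P[_]; apply/funext => w; rewrite affine_rvE.
rewrite expectation_affine_sqr; last exact: latent_L2.
rewrite latent_cov_form addrA; congr ((c + _) ^+ 2 + _ + _)%:E.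
rewrite big_sumType /= [X in _ + X]big1 ?addr0 => [|p _]; last by rewrite mean_latent mulr0.
by rewrite big_distrr /=; apply: eq_bigr => s _; rewrite mean_latent mulrC.
Qed.

Lemma sigma_form_ge0 be : 0 <= sigma_form be be.
Proof.
have : (0 <= 'E_P[fun w => (affine_rv 0 (fun _ => 0) be w ^+ 2)%R])%E.
  by apply: expectation_ge0 => w; exact: sqr_ge0.
rewrite expectation_affine_rv_sqr lee_fin !big1 //; last by move=> *; rewrite expr0n.
by rewrite !mulr0 addr0 add0r expr0n add0r.
Qed.

Lemma risk_affine (est tru : T -> R) c al be :
  (forall w, est w - tru w = affine_rv c al be w) ->
  risk P est tru =
  ((c + mu * \sum_s al s) ^+ 2 + tau2 * \sum_s al s ^+ 2 + sigma_form be be)%:E.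
Proof.
move=> E; rewrite /risk -expectation_affine_rv_sqr.
by congr 'E_P[_]; apply/funext => w; rewrite E.
Qed.

Lemma sum_routes_exchange (Q : pred 'I_N) (F : Seg -> R) :
  \sum_(n | Q n) \sum_(s in yN n) F s = \sum_s #|[set n | Q n && (s \in yN n)]|%:R * F s.
Proof.
rewrite (exchange_big_dep xpredT) //=; apply: eq_bigr => s _.
by rewrite mulr_natl -sumr_const; apply: eq_bigl => n; rewrite inE.
Qed.

Lemma sigma_formZl k be be' :
  sigma_form (fun n s => k * be n s) be' = k * sigma_form be be'.
Proof.
rewrite /sigma_form big_distrr /=; apply: eq_bigr => n _; rewrite big_distrr /=.
by apply: eq_bigr => s _; rewrite big_distrr /=; apply: eq_bigr => t _; rewrite !mulrA.
Qed.

Lemma sigma_sym n s t : s \in yN n -> t \in yN n -> sigma t s = sigma s t.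
Proof. by move=> ns nt; have := eps_cov ns nt; rewrite covarianceC eps_cov // => -[]. Qed.

Lemma sigma_formC be be' : sigma_form be be' = sigma_form be' be.
Proof.
rewrite /sigma_form; apply: eq_bigr => n _; rewrite exchange_big.
by apply: eq_bigr => s ns; apply: eq_bigr => t nt; rewrite (sigma_sym ns nt); ring.
Qed.

Lemma sigma_form_suml (J : finType) (B : pred J) (f : J -> 'I_N -> Seg -> R) be' :
  sigma_form (fun n s => \sum_(j | B j) f j n s) be' = \sum_(j | B j) sigma_form (f j) be'.
Proof.
rewrite /sigma_form.
under eq_bigr do under eq_bigr do under eq_bigr do rewrite !big_distrl /=.
under eq_bigr do under eq_bigr do rewrite exchange_big /=.
by under eq_bigr do rewrite exchange_big /=; rewrite exchange_big.
Qed.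

Lemma sigma_form_sum (J : finType) (B : pred J) (x : J -> R) (f : J -> 'I_N -> Seg -> R) :
  sigma_form (fun n s => \sum_(j | B j) x j * f j n s) (fun n s => \sum_(j | B j) x j * f j n s)
  = \sum_(i | B i) \sum_(j | B j) x i * x j * sigma_form (f i) (f j).
Proof.
rewrite sigma_form_suml; apply: eq_bigr => i _.
rewrite sigma_formZl sigma_formC sigma_form_suml big_distrr /=; apply: eq_bigr => j _.
by rewrite sigma_formZl sigma_formC mulrA.
Qed.

Definition seg_coef (S : {set Seg}) (n : 'I_N) (s : Seg) : R :=
  (S \subset yN n)%:R * (s \in S)%:R / (NS yN S)%:R.

Lemma seg_meanE S w : (0 < NS yN S)%N ->
  (\sum_(n | S \subset yN n) \sum_(s in S) Tobs theta eps n s w) / (NS yN S)%:R =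
  \sum_(s in S) theta s w + \sum_n \sum_(s in yN n) seg_coef S n s * eps n s w.
Proof.
move=> NS_gt0; have NS_neq0 : (NS yN S)%:R != 0 :> R by rewrite pnatr_eq0 -lt0n.
rewrite /Tobs; under eq_bigr do rewrite big_split /=.
rewrite big_split /=.
have -> : \sum_(n | S \subset yN n) \sum_(s in S) theta s w =
    (NS yN S)%:R * \sum_(s in S) theta s w.
  by rewrite mulr_natl -sumr_const; apply: eq_bigl => n; rewrite inE.
have -> : \sum_n \sum_(s in yN n) seg_coef S n s * eps n s w =
    (\sum_(n | S \subset yN n) \sum_(s in S) eps n s w) / (NS yN S)%:R.
  rewrite [in RHS]big_mkcond big_distrl /=; apply: eq_bigr => n _.
  rewrite /seg_coef; case: ifP => Sn /=.
    rewrite big_distrl /= -(sum_subset_natr _ Sn); apply: eq_bigr => s _; ring.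
  by rewrite mul0r; apply: big1 => s _; rewrite !mul0r.
by field.
Qed.

Lemma sigma_form_seg_coef S U :
  sigma_form (seg_coef S) (seg_coef U) = (NS yN (S :|: U))%:R /
    ((NS yN S)%:R * (NS yN U)%:R) * \sum_(s in S) \sum_(t in U) sigma s t.
Proof.
set K := (\sum_(s in S) \sum_(t in U) sigma s t) / ((NS yN S)%:R * (NS yN U)%:R).
have term n : \sum_(s in yN n) \sum_(t in yN n) seg_coef S n s * seg_coef U n t * sigma s t =
    (S :|: U \subset yN n)%:R * K.
  rewrite finset.subUset; have [/andP[Sn Un]|nSU] := boolP (_ && _); last first.
    rewrite mul0r; apply: big1 => s _; apply: big1 => t _; rewrite /seg_coef.
    by move: nSU; case: (S \subset yN n); case: (U \subset yN n) => //= _;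
      rewrite !(mul0r, mulr0).
  rewrite ?mulr1n mul1r /K big_distrl /= -(sum_subset_natr _ Sn); apply: eq_bigr => s _.
  rewrite big_distrl /= big_distrr /= -(sum_subset_natr _ Un).
  by apply: eq_bigr => t _; rewrite /seg_coef Sn Un /= invfM; ring.
have card_SU : \sum_n (S :|: U \subset yN n)%:R = (NS yN (S :|: U))%:R :> R.
  by rewrite -sum_mem_card; apply: eq_bigr => n _; rewrite inE.
by rewrite /sigma_form (eq_bigr _ (fun n _ => term n)) -big_distrl /= card_SU /K; ring.
Qed.

Section RouteEstimator.
Variables (y : {set Seg}) (delta : {set {set Seg}}).
Hypothesis yN_card_gt0 : forall n, (0 < #|yN n|)%N.
Hypothesis tau2_gt0 : 0 < tau2.
Hypothesis M_gt0 : (0 < Mdelta yN delta)%N.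

Let M : R := (Mdelta yN delta)%:R.
Let Nd (s : Seg) : R := (Ndelta yN delta s)%:R.
Let a s := Nd s / M.
Let b n (s : Seg) := (yN n \in delta)%:R / M.

Definition route_curv : R :=
  mu ^+ 2 * (ybar yN delta - #|y|%:R) ^+ 2 + tau2 * \sum_s a s ^+ 2 + sigma_form b b.
Definition route_cross : R := tau2 * \sum_(s in y) a s.

Lemma route_est_err phi w :
  route_est yN theta eps mu y delta phi w - truth theta y w =
  affine_rv ((1 - phi) * #|y|%:R * mu) (fun s => phi * a s - (s \in y)%:R)
    (fun n s => phi * b n s) w.
Proof.
rewrite /route_est /truth /affine_rv /Tobs -/M.
under eq_bigr do rewrite big_split /=.
rewrite big_split /= sum_routes_exchange [\sum_(s in y) _]sumr_mkcond_natr.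
rewrite [\sum_(n | yN n \in delta) _]sumr_mkcond_natr.
have e1 : \sum_s (phi * a s - (s \in y)%:R) * theta s w =
    phi / M * \sum_s Nd s * theta s w - \sum_s (s \in y)%:R * theta s w.
  by rewrite big_distrr -sumrB /=; apply: eq_bigr => s _; rewrite /a; ring.
have e2 : \sum_n \sum_(s in yN n) phi * b n s * eps n s w =
    phi / M * \sum_n (yN n \in delta)%:R * \sum_(s in yN n) eps n s w.
  rewrite big_distrr /=; apply: eq_bigr => n _; rewrite mulrA big_distrr /=.
  by apply: eq_bigr => s _; rewrite /b; ring.
by rewrite e1 e2; ring.
Qed.

Lemma sum_route_weights : \sum_s a s = ybar yN delta.
Proof.
rewrite /ybar -big_distrl /=; congr (_ / _); symmetry.
transitivity (\sum_(n | yN n \in delta) \sum_(s in yN n) (1 : R)).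
  by apply: eq_bigr => n _; rewrite sumr_const.
by rewrite sum_routes_exchange; apply: eq_bigr => s _; rewrite mulr1.
Qed.

Lemma route_riskE phi :
  risk P (route_est yN theta eps mu y delta phi) (truth theta y) =
  (phi ^+ 2 * route_curv - 2 * phi * route_cross + tau2 * #|y|%:R)%:E.
Proof.
rewrite (risk_affine (route_est_err phi)); congr (_%:E).
have card_y := sum_mem_card R y.
have -> : (1 - phi) * #|y|%:R * mu + mu * \sum_s (phi * a s - (s \in y)%:R) =
    phi * (mu * (ybar yN delta - #|y|%:R)).
  by rewrite sumrB -big_distrr /= sum_route_weights card_y; ring.
have -> : \sum_s (phi * a s - (s \in y)%:R) ^+ 2 =
    phi ^+ 2 * \sum_s a s ^+ 2 - 2 * phi * \sum_(s in y) a s + #|y|%:R.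
  rewrite [\sum_(s in y) _]sumr_mkcond_natr -card_y !big_distrr /= -sumrB -big_split /=.
  by apply: eq_bigr => s _; case: (s \in y) => /=; ring.
rewrite sigma_formZl sigma_formC sigma_formZl /route_curv /route_cross; ring.
Qed.

Lemma Mdelta_neq0 : M != 0.
Proof. by rewrite pnatr_eq0 -lt0n. Qed.

Lemma Ndelta_eq0 s : s \notin Sdelta delta -> Ndelta yN delta s = 0%N.
Proof.
move=> sS; apply/eqP; rewrite cards_eq0; apply/eqP/setP => n; rewrite !inE.
by apply: contraNF sS => /andP[nd sn]; apply/bigcupP; exists (yN n).
Qed.

Lemma route_curv_mulM : route_curv * M =
  (\sum_(s in Sdelta delta) Nd s ^+ 2 / M) * tau2
  + (\sum_(n | yN n \in delta) \sum_(s in yN n) \sum_(t in yN n) sigma s t) / M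
  + M * mu ^+ 2 * (ybar yN delta - #|y|%:R) ^+ 2.
Proof.
have sum_a2 : \sum_s a s ^+ 2 = (\sum_(s in Sdelta delta) Nd s ^+ 2 / M) / M.
  rewrite big_distrl [RHS]big_mkcond /=; apply: eq_bigr => s _.
  case: ifP => sS; first by rewrite /a; field; exact: Mdelta_neq0.
  by rewrite /a /Nd Ndelta_eq0 ?sS // !mul0r expr0n.
have sigma_b : sigma_form b b =
    (\sum_(n | yN n \in delta) \sum_(s in yN n) \sum_(t in yN n) sigma s t) / M / M.
  rewrite /sigma_form [X in _ = X / M / M]big_mkcond !big_distrl /=.
  apply: eq_bigr => n _; rewrite /b; case: (yN n \in delta) => /=.
    rewrite !big_distrl /=; apply: eq_bigr => s _; rewrite !big_distrl /=.
    by apply: eq_bigr => t _; field; exact: Mdelta_neq0.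
  by rewrite !mul0r; apply: big1 => s _; apply: big1 => t _; rewrite !mul0r.
rewrite /route_curv sum_a2 sigma_b; field; exact: Mdelta_neq0.
Qed.

Lemma route_cross_mulM : route_cross * M = (\sum_(s in y) Nd s) * tau2.
Proof. by rewrite /route_cross /a -big_distrl /=; field; exact: Mdelta_neq0. Qed.

Lemma route_curv_gt0 : 0 < route_curv.
Proof.
have [n0 n0d] : exists n0, yN n0 \in delta.
  by move: M_gt0; rewrite /Mdelta card_gt0 => /set0Pn[n0]; rewrite inE; exists n0.
have [s0 s0n0] : exists s0, s0 \in yN n0 by apply/set0Pn; rewrite -card_gt0.
have a_s0 : 0 < a s0.
  rewrite /a divr_gt0 ?ltr0n // card_gt0; apply/set0Pn; exists n0.
  by rewrite inE n0d s0n0.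
have sum_a2 : 0 < \sum_s a s ^+ 2.
  rewrite (bigD1 s0) //= ltr_wpDr ?exprn_gt0 //.
  by apply: sumr_ge0 => s _; exact: sqr_ge0.
have := sigma_form_ge0 b; have := sqr_ge0 (mu * (ybar yN delta - #|y|%:R)).
rewrite /route_curv exprMn; have := mulr_gt0 tau2_gt0 sum_a2; lra.
Qed.

Lemma route_cross_phistar :
  route_cross = phistar_route yN sigma mu tau2 y delta * route_curv.
Proof.
have -> : phistar_route yN sigma mu tau2 y delta = route_cross * M / (route_curv * M).
  by rewrite route_curv_mulM route_cross_mulM.
by field; rewrite Mdelta_neq0 gt_eqF ?route_curv_gt0.
Qed.

Lemma route_est_optimal phi :
  (risk P (route_est yN theta eps mu y delta (phistar_route yN sigma mu tau2 y delta))
     (truth theta y)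
   <= risk P (route_est yN theta eps mu y delta phi) (truth theta y))%E.
Proof.
rewrite !route_riskE lee_fin; apply: quadratic_argmin.
  exact/ltW/route_curv_gt0.
exact: route_cross_phistar.
Qed.

End RouteEstimator.

Section SegmentEstimator.
Variables (y : {set Seg}) (Sy : {set {set Seg}}).
Hypothesis tau2_gt0 : 0 < tau2.
Hypothesis Sy_partition : finset.partition Sy y.
Hypothesis NS_gt0 : forall S, S \in Sy -> (0 < NS yN S)%N.

Let C S U := sigma_form (seg_coef S) (seg_coef U).
Let wS (S : {set Seg}) := #|S|%:R * tau2.

Lemma seg_est_err phi w :
  seg_est yN theta eps mu Sy phi w - truth theta y w =
  affine_rv (\sum_(S in Sy) (1 - phi S) * #|S|%:R * mu)
    (fun s => \sum_(S in Sy) phi S * (s \in S)%:R - (s \in y)%:R)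
    (fun n s => \sum_(S in Sy) phi S * seg_coef S n s) w.
Proof.
rewrite /seg_est /truth /affine_rv.
rewrite (eq_bigr (fun S => (1 - phi S) * #|S|%:R * mu + phi S * \sum_(s in S) theta s w
    + phi S * \sum_n \sum_(s in yN n) seg_coef S n s * eps n s w)); last first.
  by move=> S SSy; rewrite seg_meanE ?NS_gt0 //; ring.
have e_theta : \sum_s (\sum_(S in Sy) phi S * (s \in S)%:R - (s \in y)%:R) * theta s w =
    \sum_(S in Sy) phi S * \sum_(s in S) theta s w - \sum_(s in y) theta s w.
  under eq_bigr do rewrite mulrBl big_distrl /=.
  rewrite sumrB exchange_big /= [\sum_(s in y) _]sumr_mkcond_natr; congr (_ - _).
  apply: eq_bigr => S _; rewrite [\sum_(s in S) _]sumr_mkcond_natr big_distrr /=.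
  by apply: eq_bigr => s _; ring.
have e_eps : \sum_n \sum_(s in yN n) (\sum_(S in Sy) phi S * seg_coef S n s) * eps n s w =
    \sum_(S in Sy) phi S * \sum_n \sum_(s in yN n) seg_coef S n s * eps n s w.
  under eq_bigr do under eq_bigr do rewrite big_distrl /=.
  under eq_bigr do rewrite exchange_big /=.
  rewrite exchange_big /=; apply: eq_bigr => S _; rewrite big_distrr /=.
  apply: eq_bigr => n _; rewrite big_distrr /=.
  by apply: eq_bigr => s _; ring.
by rewrite e_theta e_eps !big_split /=; ring.
Qed.

Lemma seg_riskE phi :
  risk P (seg_est yN theta eps mu Sy phi) (truth theta y) = (penalized_quad Sy C wS phi)%:E.
Proof.
rewrite (risk_affine (seg_est_err phi)) sigma_form_sum /penalized_quad; congr (_%:E).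
have -> : \sum_(S in Sy) (1 - phi S) * #|S|%:R * mu
    + mu * \sum_s (\sum_(S in Sy) phi S * (s \in S)%:R - (s \in y)%:R) = 0.
  rewrite sumrB sum_mem_card exchange_big /= (card_partition Sy_partition) natr_sum.
  under [X in _ * (X - _)]eq_bigr do rewrite -big_distrr /= sum_mem_card.
  by rewrite mulrBr !big_distrr -sumrB -big_split /=; apply: big1 => S _; ring.
rewrite expr0n add0r; congr (_ + _).
have sq s : (\sum_(S in Sy) phi S * (s \in S)%:R - (s \in y)%:R) ^+ 2 =
    \sum_(S in Sy) (s \in S)%:R * (phi S - 1) ^+ 2.
  under eq_bigr do rewrite mulrC.
  by rewrite !(partition_sum_natr _ _ Sy_partition); case: (s \in y) => /=; ring.
under eq_bigr do rewrite sq.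
rewrite exchange_big big_distrr /=; apply: eq_bigr => S _.
by rewrite -big_distrl /= sum_mem_card /wS; ring.
Qed.

Lemma seg_systemE x : seg_system yN sigma tau2 Sy x <-> normal_eq Sy C wS x.
Proof.
have termE S : \sum_(S' in Sy) ((NS yN (S :|: S'))%:R / ((NS yN S)%:R * (NS yN S')%:R)
      * x S' * (\sum_(s in S) \sum_(t in S') sigma s t)) + (x S - 1) * #|S|%:R * tau2 =
    \sum_(U in Sy) C S U * x U + (x S - 1) * wS S.
  rewrite /wS mulrA; congr (_ + _); apply: eq_bigr => U _.
  by rewrite /C sigma_form_seg_coef; ring.
by split=> sys S SSy; [rewrite -termE | rewrite termE]; exact: sys.
Qed.

Lemma seg_est_optimal :
  exists phis : {set Seg} -> R,
    seg_system yN sigma tau2 Sy phis /\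
    (forall psi, seg_system yN sigma tau2 Sy psi -> {in Sy, psi =1 phis}) /\
    (forall phi : {set Seg} -> R,
       (forall psi : {set Seg} -> R,
          (risk P (seg_est yN theta eps mu Sy phi) (truth theta y)
           <= risk P (seg_est yN theta eps mu Sy psi) (truth theta y))%E)
       <-> {in Sy, phi =1 phis}).
Proof.
have C_sym : {in Sy &, forall S U, C S U = C U S} by move=> S U _ _; exact: sigma_formC.
have C_psd x : 0 <= \sum_(S in Sy) \sum_(U in Sy) x S * x U * C S U.
  by rewrite /C -sigma_form_sum sigma_form_ge0.
have wS_gt0 S : S \in Sy -> 0 < wS S.
  move=> SSy; rewrite /wS mulr_gt0 // ltr0n card_gt0.
  by apply: contraTneq SSy => ->; case/and3P: Sy_partition.
have [z nz] := normal_eq_exists C_psd wS_gt0.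
exists z; split; first exact/seg_systemE.
split; first by move=> psi /seg_systemE; exact: normal_eq_uniq.
move=> phi; rewrite -(penalized_quad_minP C_sym C_psd wS_gt0 phi nz).
by split=> phi_min psi; have := phi_min psi; rewrite !seg_riskE lee_fin.
Qed.

End SegmentEstimator.
End TravelTimeModel.

Unset Implicit Arguments.

Theorem proposition2p4
  (d : measure_display) (T : measurableType d) (R : realType)
  (P : probability T R) (Seg : finType) (N : nat)
  (yN : 'I_N -> {set Seg})
  (theta : Seg -> T -> R) (eps : 'I_N -> Seg -> T -> R)
  (mu tau2 : R) (sigma : Seg -> Seg -> R) (y : {set Seg})
  (hyN : forall n, (0 < #|yN n|)%N)
  (htau : 0 < tau2)
  (htheta_L2 : forall s, theta s \in Lfun P 2%:E)
  (heps_L2 : forall n s, s \in yN n -> eps n s \in Lfun P 2%:E)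
  (htheta_mean : forall s, ('E_P[theta s])%E = mu%:E)
  (htheta_var : forall s, ('V_P[theta s])%E = tau2%:E)
  (htheta_uncorr : forall s t, s != t -> covariance P (theta s) (theta t) = 0%E)
  (htheta_eps : forall s n t, t \in yN n -> covariance P (theta s) (eps n t) = 0%E)
  (heps_mean : forall n s, s \in yN n -> ('E_P[eps n s])%E = 0%E)
  (heps_cov : forall n s t, s \in yN n -> t \in yN n ->
     covariance P (eps n s) (eps n t) = (sigma s t)%:E)
  (heps_indep : forall n m s t, n != m -> s \in yN n -> t \in yN m ->
     covariance P (eps n s) (eps m t) = 0%E) :
  (* (1) generalized segment-based estimator *)
  (forall Sy : {set {set Seg}},
     finset.partition Sy y ->
     (forall S, S \in Sy -> (0 < NS yN S)%N) ->
     exists phis : {set Seg} -> R,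
       seg_system yN sigma tau2 Sy phis /\
       (forall psi, seg_system yN sigma tau2 Sy psi -> {in Sy, psi =1 phis}) /\
       (forall phi : {set Seg} -> R,
          (forall psi : {set Seg} -> R,
             (risk P (seg_est yN theta eps mu Sy phi) (truth theta y)
              <= risk P (seg_est yN theta eps mu Sy psi) (truth theta y))%E)
          <-> {in Sy, phi =1 phis}))
  /\
  (* (2) route-based estimator *)
  (forall delta : {set {set Seg}},
     (forall y', y' \in delta -> exists n, yN n = y') ->
     (0 < Mdelta yN delta)%N ->
     forall phi : R,
       (risk P (route_est yN theta eps mu y delta
                  (phistar_route yN sigma mu tau2 y delta)) (truth theta y)
        <= risk P (route_est yN theta eps mu y delta phi) (truth theta y))%E).
Proof.
split=> [Sy Sy_part NS_gt0 | delta _ M_gt0 phi].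
  exact: seg_est_optimal.
exact: route_est_optimal.
Qed.
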